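(* Let $v,d\in\mathbb{C}$ with $v\neq0$, $d\neq0$, and let $HC_F(v,d)\subset\mathbb{C}P^4$ be the curve defined in coordinates $[z_0,z_1,z_2,z_3,x]$ by $z_2^2-z_0^2=z_3^2-z_1^2$, $x^2+z_2^2-z_0^2=0$, $v(z_0-z_1)x-dz_0z_1=0$. Let $\mathbf p_1,\dots,\mathbf p_4$ be the points $[-1,0,1,0,0]$, $[1,0,1,0,0]$, $[0,-1,0,1,0]$, $[0,1,0,1,0]$. Then: if $d^2\neq4v^2$, the only singular points of $HC_F(v,d)$ are $\mathbf p_1,\mathbf p_2,\mathbf p_3,\mathbf p_4$; if $d=2v$, $HC_F(v,d)$ has exactly five singular points $\mathbf p_1,\mathbf p_2,\mathbf p_3,\mathbf p_4,[1,-1,0,0,-1]$; if $d=-2v$, $HC_F(v,d)$ has exactly five singular points $\mathbf p_1,\mathbf p_2,\mathbf p_3,\mathbf p_4,[1,-1,0,0,1]$.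
   Context: This is the case of equal sensor velocities $\mathbf v_1=\mathbf v_2=(0,v)$ of the curve $\{(u-y_1)^2+y_2^2=r_1^2,\ (u+y_1)^2+y_2^2=r_2^2,\ L_2r_1-L_1r_2-dr_1r_2=0\}$ with $L_1=-vy_2$, $L_2=-vy_2$, written in coordinates $z_0=4r_1$, $z_1=4r_2$, $z_2=4(u-y_1)$, $z_3=-4(u+y_1)$, $x=-4y_2$. A singular point is a point where the $3\times5$ Jacobian matrix of the three defining polynomials has rank less than $3$. *)

From HB Require Import structures.
From mathcomp Require Import all_boot all_order all_algebra.
From mathcomp Require Import mpoly.
Set Implicit Arguments. Unset Strict Implicit. Unset Printing Implicit Defensive.
Import Order.TTheory GRing.Theory Num.Theory.
Local Open Scope ring_scope.

(* Homogeneous coordinates [z0,z1,z2,z3,x] of CP^4 are indexed by 'I_5: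
   index 0 = z0, 1 = z1, 2 = z2, 3 = z3, 4 = x. *)

Section HCF.
Variable C : numClosedFieldType.

Definition Xv (k : nat) : {mpoly C[5]} := 'X_(inord k).

Definition HCF_F1 : {mpoly C[5]} :=
  Xv 2 ^+ 2 - Xv 0 ^+ 2 - (Xv 3 ^+ 2 - Xv 1 ^+ 2).
Definition HCF_F2 : {mpoly C[5]} :=
  Xv 4 ^+ 2 + Xv 2 ^+ 2 - Xv 0 ^+ 2.
Definition HCF_F3 (v d : C) : {mpoly C[5]} :=
  v%:MP * (Xv 0 - Xv 1) * Xv 4 - d%:MP * Xv 0 * Xv 1.

Definition HCF_eqs (v d : C) (i : 'I_3) : {mpoly C[5]} :=
  match val i with
  | 0 => HCF_F1
  | 1 => HCF_F2
  | _ => HCF_F3 v d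
  end.

Definition evalpt (p : 'rV[C]_5) (f : {mpoly C[5]}) : C :=
  meval (fun j => p 0 j) f.

Definition HCF_jac (v d : C) (p : 'rV[C]_5) : 'M[C]_(3, 5) :=
  \matrix_(i < 3, j < 5) evalpt p (mderiv j (HCF_eqs v d i)).

Definition on_HCF (v d : C) (p : 'rV[C]_5) : Prop :=
  p != 0 /\ forall i : 'I_3, evalpt p (HCF_eqs v d i) = 0.

Definition HCF_singular (v d : C) (p : 'rV[C]_5) : Prop :=
  on_HCF v d p /\ (\rank (HCF_jac v d p) < 3)%N.

Definition proj_eq (p q : 'rV[C]_5) : Prop :=
  exists c : C, c != 0 /\ p = c *: q.

Definition pt5 (a b c e f : C) : 'rV[C]_5 :=
  \row_(j < 5) nth 0 [:: a; b; c; e; f] j.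

Definition pp1 : 'rV[C]_5 := pt5 (-1) 0 1 0 0.
Definition pp2 : 'rV[C]_5 := pt5 1 0 1 0 0.
Definition pp3 : 'rV[C]_5 := pt5 0 (-1) 0 1 0.
Definition pp4 : 'rV[C]_5 := pt5 0 1 0 1 0.

End HCF.

(* A point is singular iff a grad F1 + b grad F2 + c grad F3 = 0 there for
   some (a, b, c) != 0.  The curve is cut out by the cones x^2 + z2^2 = z0^2,
   x^2 + z3^2 = z1^2 and by F3.  If c = 0 the relation involves only the cones
   and forces x = 0 and z1 = z3 = 0 or z0 = z2 = 0: these are p1, ..., p4.
   If c != 0, then a + b = 0 would give v x = d z1, which with F3 forces
   z1 = 0 and then the whole point to vanish (symmetrically for a = 0).  So
   z2 = z3 = 0, hence x^2 = z0^2 = z1^2, and F3 leaves only z1 = -z0 with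
   x = -+z0, which happens exactly when d = +-2v. *)

From HB Require Import structures.
From mathcomp Require Import all_boot all_order all_algebra.
From mathcomp Require Import mpoly.
From mathcomp Require Import ring.
Set Implicit Arguments.
Unset Strict Implicit.
Unset Printing Implicit Defensive.
Import Order.TTheory GRing.Theory Num.Theory.
Local Open Scope ring_scope.

Lemma mderivXU (R : comNzRingType) n (i j : 'I_n) :
  mderiv i ('X_j : {mpoly R[n]}) = (j == i)%:R%:MP.
Proof.
rewrite mderivX mnm1E; case: eqP => [->|_]; last by rewrite scale0r.
by rewrite -{1}[mnm1 i]add0m addmK mpolyX0 -mul_mpolyC mulr1.
Qed.

Lemma rank_lt_rowsP (F : fieldType) m n (A : 'M[F]_(m, n)) :
  reflect (exists2 u : 'rV_m, u != 0 & u *m A = 0) (\rank A < m)%N.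
Proof.
have -> : (\rank A < m)%N = ~~ row_free A.
  by rewrite /row_free ltn_neqAle rank_leq_row andbT.
rewrite -kermx_eq0; apply: (iffP rowV0Pn).
  by case=> u /sub_kermxP uA u0; exists u.
by case=> u u0 /sub_kermxP uA; exists u.
Qed.

Lemma two_neq0 {R : numDomainType} : (2 : R) != 0.
Proof. by rewrite pnatr_eq0. Qed.

Section Equations.
Variable R : numDomainType.

(* F1 = 0 is traded for F2 - F1 = 0, so the curve is cut out by two quadric
   cones through the x axis together with F3 = 0. *)
Definition HCF_point_eqs (v d z0 z1 z2 z3 x : R) : Prop :=
  [/\ x ^+ 2 + z2 ^+ 2 = z0 ^+ 2, x ^+ 2 + z3 ^+ 2 = z1 ^+ 2
    & v * (z0 - z1) * x = d * z0 * z1].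

(* a grad F1 + b grad F2 + c grad F3 = 0, coordinate by coordinate. *)
Definition HCF_gradient_relation (v d a b c z0 z1 z2 z3 x : R) : Prop :=
  [/\ c * (v * x - d * z1) = 2 * (a + b) * z0,
      2 * a * z1 = c * (v * x + d * z0),
      2 * (a + b) * z2 = 0, 2 * a * z3 = 0
    & 2 * b * x + c * v * (z0 - z1) = 0].

Lemma eq_from_multiple (s l r l' r' : R) :
  l = r -> l' - r' = s * (l - r) -> l' = r'.
Proof. by move=> -> /eqP; rewrite subrr mulr0 subr_eq0 => /eqP. Qed.

Lemma HCF_gradient_c0 (v d a b z0 z1 z2 z3 x : R) :
  (a != 0) || (b != 0) -> HCF_point_eqs v d z0 z1 z2 z3 x ->
  HCF_gradient_relation v d a b 0 z0 z1 z2 z3 x ->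
  x = 0 /\ ([/\ z1 = 0, z3 = 0 & z2 ^+ 2 = z0 ^+ 2]
            \/ [/\ z0 = 0, z2 = 0 & z3 ^+ 2 = z1 ^+ 2]).
Proof.
move=> ab0 [e2 e3 _] [g0 g1 g2 g3 _]; rewrite !mul0r in g0 g1.
have sqr0 (y : R) : y ^+ 2 = 0 -> y = 0 by move/eqP; rewrite sqrf_eq0 => /eqP.
have [ab|ab] := eqVneq (a + b) 0.
  have a0 : 2 * a != 0.
    rewrite mulf_neq0 ?two_neq0 //; apply: contraTneq ab0 => a0.
    by move: ab; rewrite a0 add0r => ->; rewrite eqxx.
  have z10 : z1 = 0 by apply: (mulfI a0); rewrite g1 mulr0.
  have z30 : z3 = 0 by apply: (mulfI a0); rewrite g3 mulr0.
  rewrite z10 z30 expr0n addr0 in e3.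
  rewrite (sqr0 _ e3) expr0n add0r in e2 *.
  by split=> //; left; split.
have ab2 : 2 * (a + b) != 0 by rewrite mulf_neq0 ?two_neq0.
have z00 : z0 = 0 by apply: (mulfI ab2); rewrite -g0 mulr0.
have z20 : z2 = 0 by apply: (mulfI ab2); rewrite g2 mulr0.
rewrite z00 z20 expr0n addr0 in e2.
rewrite (sqr0 _ e2) expr0n add0r in e3 *.
by split=> //; right; split.
Qed.

(* With c != 0 and a + b = 0 a gradient relation leaves only the origin; the
   case a = 0 is the same statement after swapping z0, z1 and negating v. *)
Lemma HCF_single_cone_origin (v d c k z0 z1 x : R) : v != 0 -> d != 0 -> c != 0 ->
  v * (z0 - z1) * x = d * z0 * z1 -> v * x = d * z1 ->
  k * z1 = c * (v * x + d * z0) -> [/\ z0 = 0, z1 = 0 & x = 0].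
Proof.
move=> v0 d0 c0 eF ex ek.
have z10 : z1 = 0.
  have : d * z1 ^+ 2 = d * z0 * z1 - v * (z0 - z1) * x.
    by rewrite [v * _ * x]mulrAC ex; ring.
  by rewrite eF subrr => /eqP; rewrite mulf_eq0 sqrf_eq0 (negbTE d0) => /eqP.
have x0 : x = 0 by apply: (mulfI v0); rewrite ex z10 !mulr0.
move: ek; rewrite z10 x0 !mulr0 add0r => /esym/eqP.
by rewrite !mulf_eq0 (negbTE c0) (negbTE d0) /= => /eqP.
Qed.

Lemma HCF_gradient_c_neq0 (v d a b c z0 z1 z2 z3 x : R) :
  v != 0 -> d != 0 -> c != 0 ->
  ~~ [&& z0 == 0, z1 == 0, z2 == 0, z3 == 0 & x == 0] ->
  HCF_point_eqs v d z0 z1 z2 z3 x -> HCF_gradient_relation v d a b c z0 z1 z2 z3 x ->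
  z2 = 0 /\ z3 = 0.
Proof.
move=> v0 d0 c0 nz [e2 e3 eF] [g0 g1 g2 g3 _].
have not_origin : ~ [/\ z0 = 0, z1 = 0 & x = 0].
  case=> z00 z10 x0; move: e2 e3 nz; rewrite z00 z10 x0 expr0n !add0r.
  move=> /eqP; rewrite sqrf_eq0 => /eqP-> /eqP; rewrite sqrf_eq0 => /eqP->.
  by rewrite eqxx.
have ab0 : a + b != 0.
  apply: contra_notN not_origin => /eqP ab; rewrite ab mulr0 mul0r in g0.
  apply: (HCF_single_cone_origin v0 d0 c0 eF _ g1).
  by apply/eqP; rewrite -subr_eq0 -(mulrI_eq0 _ (mulfI c0)) g0.
have a0 : a != 0.
  apply: contra_notN not_origin => /eqP a0; rewrite a0 mulr0 mul0r in g1.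
  suff [-> -> ->] : [/\ z1 = 0, z0 = 0 & x = 0] by [].
  apply: (@HCF_single_cone_origin (- v) d c (- (2 * (a + b)))) => //.
  - by rewrite oppr_eq0.
  - by apply: (eq_from_multiple (s := 1) eF); ring.
  - by apply/eqP; rewrite mulNr eqr_oppLR -addr_eq0 -(mulrI_eq0 _ (mulfI c0)) -g1.
  - by apply: (eq_from_multiple (s := 1) g0); ring.
split.
  by apply: (mulfI (mulf_neq0 two_neq0 ab0)); rewrite g2 mulr0.
by apply: (mulfI (mulf_neq0 two_neq0 a0)); rewrite g3 mulr0.
Qed.

Lemma HCF_special_point (v d z0 z1 x : R) :
  d != 0 -> [|| z0 != 0, z1 != 0 | x != 0] ->
  z0 ^+ 2 = x ^+ 2 -> z1 ^+ 2 = x ^+ 2 -> v * (z0 - z1) * x = d * z0 * z1 ->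
  d = 2 * v /\ z1 = - z0 /\ x = - z0 \/ d = - (2 * v) /\ z1 = - z0 /\ x = z0.
Proof.
move=> d0 nz e0 e1 eF.
have x0 : x != 0.
  apply: contraTneq nz => x0; rewrite x0 in e0 e1 *.
  rewrite expr0n in e0 e1; move: e0 e1.
  move=> /eqP; rewrite sqrf_eq0 => /eqP-> /eqP; rewrite sqrf_eq0 => /eqP->.
  by rewrite eqxx.
have xx : x * x != 0 by rewrite mulf_neq0.
have dxx : d * (x * x) != 0 by rewrite mulf_neq0.
move: eF; move/eqP: e0; rewrite eqf_sqr => /orP[]/eqP->;
move/eqP: e1; rewrite eqf_sqr => /orP[]/eqP-> eF.
- by case/eqP: dxx; apply: (eq_from_multiple (s := -1) eF); ring.
- right; split; last by rewrite ?opprK.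
  by apply: (mulIf xx); apply: (eq_from_multiple (s := 1) eF); ring.
- left; split; last by rewrite ?opprK.
  by apply: (mulIf xx); apply: (eq_from_multiple (s := 1) eF); ring.
- by case/eqP: dxx; apply: (eq_from_multiple (s := -1) eF); ring.
Qed.

End Equations.

Section SingularPoints.
Variable C : numClosedFieldType.
Implicit Types (p q : 'rV[C]_5) (u : 'rV[C]_3).

Definition row3 (a b c : C) : 'rV[C]_3 := \row_(i < 3) nth 0 [:: a; b; c] i.

Lemma row3_surj u : exists a b c, u = row3 a b c.
Proof.
exists (u 0 (inord 0)), (u 0 (inord 1)), (u 0 (inord 2)).
apply/rowP => -[[|[|[|i]]] hi]; rewrite !mxE //=; congr (u 0 _); apply: val_inj.
all: by rewrite /= inordK.
Qed.

Lemma row3_eq0 (a b c : C) : (row3 a b c == 0) = [&& a == 0, b == 0 & c == 0].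
Proof.
apply/eqP/and3P => [/rowP e | [/eqP-> /eqP-> /eqP->]].
  by split; apply/eqP; [move: (e (inord 0)) | move: (e (inord 1)) | move: (e (inord 2))];
     rewrite !mxE inordK.
by apply/rowP => -[[|[|[|i]]] hi]; rewrite !mxE.
Qed.

Lemma pt5_surj p : exists z0 z1 z2 z3 x, p = pt5 z0 z1 z2 z3 x.
Proof.
exists (p 0 (inord 0)), (p 0 (inord 1)), (p 0 (inord 2)), (p 0 (inord 3)), (p 0 (inord 4)).
apply/rowP => -[[|[|[|[|[|i]]]]] hi]; rewrite !mxE //=; congr (p 0 _); apply: val_inj.
all: by rewrite /= inordK.
Qed.

Lemma pt5_eq0 (z0 z1 z2 z3 x : C) :
  (pt5 z0 z1 z2 z3 x == 0) = [&& z0 == 0, z1 == 0, z2 == 0, z3 == 0 & x == 0].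
Proof.
apply/eqP/and5P => [/rowP e | [/eqP-> /eqP-> /eqP-> /eqP-> /eqP->]].
  by split; apply/eqP; [move: (e (inord 0)) | move: (e (inord 1)) | move: (e (inord 2))
     | move: (e (inord 3)) | move: (e (inord 4))]; rewrite !mxE inordK.
by apply/rowP => -[[|[|[|[|[|i]]]]] hi]; rewrite !mxE.
Qed.

Lemma scale_pt5 (k z0 z1 z2 z3 x : C) :
  k *: pt5 z0 z1 z2 z3 x = pt5 (k * z0) (k * z1) (k * z2) (k * z3) (k * x).
Proof. by apply/rowP => -[[|[|[|[|[|i]]]]] hi]; rewrite !mxE //= mulr0. Qed.

Lemma proj_eq_scale p q (k : C) : p != 0 -> p = k *: q -> proj_eq p q.
Proof.
move=> p0 pE; exists k; split=> //.
by apply: contraNneq p0 => k0; rewrite pE k0 scale0r.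
Qed.

Lemma evalpt_pt5 (z0 z1 z2 z3 x : C) (f : {mpoly C[5]}) :
  evalpt (pt5 z0 z1 z2 z3 x) f = meval (nth 0 [:: z0; z1; z2; z3; x]) f.
Proof. by apply: meval_eq => j; rewrite mxE. Qed.

Lemma evalpt_HCF_eqs (v d z0 z1 z2 z3 x : C) :
  [/\ evalpt (pt5 z0 z1 z2 z3 x) (HCF_F1 C) = z2 ^+ 2 - z0 ^+ 2 - (z3 ^+ 2 - z1 ^+ 2),
      evalpt (pt5 z0 z1 z2 z3 x) (HCF_F2 C) = x ^+ 2 + z2 ^+ 2 - z0 ^+ 2
    & evalpt (pt5 z0 z1 z2 z3 x) (HCF_F3 v d) = v * (z0 - z1) * x - d * z0 * z1].
Proof.
rewrite !evalpt_pt5 /HCF_F1 /HCF_F2 /HCF_F3 /Xv.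
by rewrite !(expr2, mevalB, mevalD, mevalM, mevalC, mevalXU) !inordK.
Qed.

Lemma row3_mulmx_HCF_jac (v d a b c z0 z1 z2 z3 x : C) :
  row3 a b c *m HCF_jac v d (pt5 z0 z1 z2 z3 x) =
  pt5 (c * (v * x - d * z1) - 2 * (a + b) * z0) (2 * a * z1 - c * (v * x + d * z0))
      (2 * (a + b) * z2) (- (2 * a * z3)) (2 * b * x + c * v * (z0 - z1)).
Proof.
apply/rowP => j; rewrite !mxE !big_ord_recr big_ord0 /= !mxE /= !evalpt_pt5.
rewrite /HCF_eqs /HCF_F1 /HCF_F2 /HCF_F3 /Xv /=.
rewrite !(expr2, mderivB, mderivD, mderivM, mderivC, mderivXU, mevalB, mevalD,
          mevalM, mevalC, mevalXU, mul0r, add0r).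
rewrite -!val_eqE /= !inordK //.
by case: j => -[|[|[|[|[|j]]]]] hj //=; ring.
Qed.

Lemma on_HCF_pt5E (v d z0 z1 z2 z3 x : C) :
  on_HCF v d (pt5 z0 z1 z2 z3 x) <->
  pt5 z0 z1 z2 z3 x != 0 /\ HCF_point_eqs v d z0 z1 z2 z3 x.
Proof.
have [E1 E2 E3] := evalpt_HCF_eqs v d z0 z1 z2 z3 x.
split=> -[p0 eqs]; split=> //.
  have := eqs ord0; have := eqs (Ordinal (isT : 1 < 3)%N).
  have := eqs (Ordinal (isT : 2 < 3)%N); rewrite /= E1 E2 E3.
  move=> /eqP; rewrite subr_eq0 => /eqP eF e2 e1; split=> //.
    by apply/eqP; rewrite -subr_eq0 e2.
  have : x ^+ 2 + z3 ^+ 2 - z1 ^+ 2 =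
         (x ^+ 2 + z2 ^+ 2 - z0 ^+ 2) - (z2 ^+ 2 - z0 ^+ 2 - (z3 ^+ 2 - z1 ^+ 2)).
    by ring.
  by rewrite e1 e2 subrr => /eqP; rewrite subr_eq0 => /eqP.
case: eqs => e2 e3 eF [[|[|[|i]]] hi] //=.
- by rewrite E1 -e2 -e3; ring.
- by rewrite E2 e2 subrr.
- by rewrite E3 eF subrr.
Qed.

Lemma HCF_singular_pt5E (v d z0 z1 z2 z3 x : C) :
  HCF_singular v d (pt5 z0 z1 z2 z3 x) <->
  [/\ pt5 z0 z1 z2 z3 x != 0, HCF_point_eqs v d z0 z1 z2 z3 x &
      exists a b c, row3 a b c != 0 /\ HCF_gradient_relation v d a b c z0 z1 z2 z3 x].
Proof.
have kerE a b c : row3 a b c *m HCF_jac v d (pt5 z0 z1 z2 z3 x) = 0 <->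
                  HCF_gradient_relation v d a b c z0 z1 z2 z3 x.
  rewrite row3_mulmx_HCF_jac; split=> [/eqP | [g0 g1 g2 g3 g4]].
    rewrite pt5_eq0 !subr_eq0 oppr_eq0.
    by case/and5P => /eqP g0 /eqP g1 /eqP g2 /eqP g3 /eqP g4; split.
  by apply/eqP; rewrite g0 g1 g2 g3 g4 !subrr oppr0 pt5_eq0 eqxx.
split=> [[/on_HCF_pt5E [p0 eqs] /rank_lt_rowsP [u u0 uJ]]
        | [p0 eqs [a [b [c [abc0 /kerE g]]]]]].
  have [a [b [c uE]]] := row3_surj u; rewrite uE in u0 uJ.
  by split=> //; exists a, b, c; split=> //; apply/kerE.
by split; [exact/on_HCF_pt5E | apply/rank_lt_rowsP; exists (row3 a b c)].
Qed.

Lemma HCF_singularZ (v d k : C) p :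
  k != 0 -> HCF_singular v d p -> HCF_singular v d (k *: p).
Proof.
move=> k0; have [z0 [z1 [z2 [z3 [x ->]]]]] := pt5_surj p.
case/HCF_singular_pt5E => p0 [e2 e3 eF] [a [b [c [abc0 [g0 g1 g2 g3 g4]]]]].
rewrite scale_pt5; apply/HCF_singular_pt5E; split.
- by rewrite -scale_pt5 scaler_eq0 negb_or k0.
- by split; [apply: (eq_from_multiple (s := k ^+ 2) e2)
           | apply: (eq_from_multiple (s := k ^+ 2) e3)
           | apply: (eq_from_multiple (s := k ^+ 2) eF)]; ring.
exists a, b, c; split=> //.
by split; [apply: (eq_from_multiple (s := k) g0) | apply: (eq_from_multiple (s := k) g1)
         | apply: (eq_from_multiple (s := k) g2) | apply: (eq_from_multiple (s := k) g3)
         | apply: (eq_from_multiple (s := k) g4)]; ring.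
Qed.

Lemma HCF_singular_proj_eq (v d : C) p q :
  proj_eq p q -> HCF_singular v d q -> HCF_singular v d p.
Proof. by case=> k [k0 ->]; apply: HCF_singularZ. Qed.

Lemma HCF_singular_base_points (v d : C) :
  [/\ HCF_singular v d (pp1 C), HCF_singular v d (pp2 C),
      HCF_singular v d (pp3 C) & HCF_singular v d (pp4 C)].
Proof.
split; apply/HCF_singular_pt5E; rewrite pt5_eq0 ?oppr_eq0 oner_eq0 ?eqxx; split=> //;
  try by split; ring.
- by exists 1, (-1), 0; rewrite row3_eq0 oner_eq0; split=> //; split; ring.
- by exists 1, (-1), 0; rewrite row3_eq0 oner_eq0; split=> //; split; ring.
- by exists 0, 1, 0; rewrite row3_eq0 oner_eq0 eqxx; split=> //; split; ring.
- by exists 0, 1, 0; rewrite row3_eq0 oner_eq0 eqxx; split=> //; split; ring.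
Qed.

Lemma HCF_singular_special_points (v : C) :
  HCF_singular v (2 * v) (pt5 1 (-1) 0 0 (-1)) /\
  HCF_singular v (- (2 * v)) (pt5 1 (-1) 0 0 1).
Proof.
split; apply/HCF_singular_pt5E; rewrite pt5_eq0 oner_eq0; split=> //;
  try by split; ring.
- exists (- v), (2 * v), 2; rewrite row3_eq0 (negbTE two_neq0) !andbF.
  by split=> //; split; ring.
- exists v, (- (2 * v)), 2; rewrite row3_eq0 (negbTE two_neq0) !andbF.
  by split=> //; split; ring.
Qed.

Lemma HCF_singular_classify (v d : C) p : v != 0 -> d != 0 -> HCF_singular v d p ->
  (proj_eq p (pp1 C) \/ proj_eq p (pp2 C) \/ proj_eq p (pp3 C) \/ proj_eq p (pp4 C))
  \/ d = 2 * v /\ proj_eq p (pt5 1 (-1) 0 0 (-1))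
  \/ d = - (2 * v) /\ proj_eq p (pt5 1 (-1) 0 0 1).
Proof.
move=> v0 d0; have [z0 [z1 [z2 [z3 [x ->]]]]] := pt5_surj p.
case/HCF_singular_pt5E => p0 eqs [a [b [c [abc0 grad]]]].
have [c0 | c0] := eqVneq c 0.
  rewrite c0 in abc0 grad; left.
  have ab0 : (a != 0) || (b != 0).
    by move: abc0; rewrite row3_eq0 eqxx andbT negb_and.
  move: p0; have [-> [[-> -> /eqP] | [-> -> /eqP]]] := HCF_gradient_c0 ab0 eqs grad;
    rewrite eqf_sqr => /orP[]/eqP-> p0.
  - right; left; apply: (proj_eq_scale (k := z0) p0).
    by rewrite /pp2 scale_pt5; congr pt5; ring.
  - left; apply: (proj_eq_scale (k := - z0) p0).
    by rewrite /pp1 scale_pt5; congr pt5; ring.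
  - do 3 right; apply: (proj_eq_scale (k := z1) p0).
    by rewrite /pp4 scale_pt5; congr pt5; ring.
  - do 2 right; left; apply: (proj_eq_scale (k := - z1) p0).
    by rewrite /pp3 scale_pt5; congr pt5; ring.
have nz := p0; rewrite pt5_eq0 in nz.
have [z20 z30] := HCF_gradient_c_neq0 v0 d0 c0 nz eqs grad.
move: p0 nz eqs; rewrite z20 z30 => p0 nz [e2 e3 eF]; right.
have nz' : [|| z0 != 0, z1 != 0 | x != 0] by move: nz; rewrite eqxx /= !negb_and.
have e0 : z0 ^+ 2 = x ^+ 2 by rewrite -e2 expr0n addr0.
have e1 : z1 ^+ 2 = x ^+ 2 by rewrite -e3 expr0n addr0.
have [[dE [z1E xE]] | [dE [z1E xE]]] := HCF_special_point d0 nz' e0 e1 eF;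
  [left | right]; split=> //; apply: (proj_eq_scale (k := z0) p0);
  by rewrite z1E xE scale_pt5; congr pt5; ring.
Qed.

Lemma HCF_singularE (v d : C) p : v != 0 -> d != 0 ->
  HCF_singular v d p <->
  (proj_eq p (pp1 C) \/ proj_eq p (pp2 C) \/ proj_eq p (pp3 C) \/ proj_eq p (pp4 C))
  \/ d = 2 * v /\ proj_eq p (pt5 1 (-1) 0 0 (-1))
  \/ d = - (2 * v) /\ proj_eq p (pt5 1 (-1) 0 0 1).
Proof.
move=> v0 d0; split; first exact: HCF_singular_classify.
have [s1 s2 s3 s4] := HCF_singular_base_points v d.
have [s5 s6] := HCF_singular_special_points v.
by case=> [[e|[e|[e|e]]] | [[-> e] | [-> e]]]; apply: (HCF_singular_proj_eq e).
Qed.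

End SingularPoints.

Theorem lemma7p1 (C : numClosedFieldType) (v d : C) :
  v != 0 -> d != 0 ->
  [/\ (d ^+ 2 != 4 * v ^+ 2 ->
        forall p : 'rV[C]_5, HCF_singular v d p <->
          (proj_eq p (pp1 C) \/ proj_eq p (pp2 C) \/ proj_eq p (pp3 C)
           \/ proj_eq p (pp4 C))),
      (d = 2 * v ->
        forall p : 'rV[C]_5, HCF_singular v d p <->
          (proj_eq p (pp1 C) \/ proj_eq p (pp2 C) \/ proj_eq p (pp3 C)
           \/ proj_eq p (pp4 C) \/ proj_eq p (pt5 1 (-1) 0 0 (-1))))
    & (d = - (2 * v) ->
        forall p : 'rV[C]_5, HCF_singular v d p <->
          (proj_eq p (pp1 C) \/ proj_eq p (pp2 C) \/ proj_eq p (pp3 C)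
           \/ proj_eq p (pp4 C) \/ proj_eq p (pt5 1 (-1) 0 0 1)))].
Proof.
move=> v0 d0.
have /eqP opp_neq : 2 * v != - (2 * v).
  by rewrite eq_sym eqNr mulf_neq0 ?two_neq0.
have opp_neq' := not_eq_sym opp_neq.
split=> [dd | dE | dE] p; have := HCF_singularE p v0 d0.
- have dP : d <> 2 * v by move=> dE; move/eqP: dd; apply; rewrite dE; ring.
  have dN : d <> - (2 * v) by move=> dE; move/eqP: dd; apply; rewrite dE; ring.
  tauto.
- by rewrite dE; tauto.
- by rewrite dE; tauto.
Qed.
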